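(* Let $g:E^2\times E^2\to\mathbb R$ and $\varepsilon>0$. There exist constants $\eta,K>0$ such that for all $s>0$ and all integers $i,\delta_1,\delta_2\ge 0$, $T\ge1$ with $i\le\delta_1$, $\delta_2\ge\delta_1-i$, $i+T\ge\delta_1+1$, writing $\varepsilon_1=\varepsilon_{(0,0),\delta_1}$ and $\varepsilon_2=\varepsilon_{(i,i+T),\delta_2}$, $$\mathbb P\big(\delta_1\varepsilon_1(f)>s,\ d(\varepsilon_1,\hat\pi)<\eta,\ \delta_2\varepsilon_2(f)>s,\ d(\varepsilon_2,\hat\pi)<\eta\big)\le K\exp\Big(-s\Big(\frac{2\hat\pi(g)-\log\varphi_1(g)}{\pi^*(f)}-\varepsilon\Big)\Big).$$
   Context: Let $E$ be a finite set and $P,Q$ irreducible aperiodic stochastic $E\times E$ matrices with invariant probability vectors $\pi_P,\pi_Q$; $\pi=\pi_P\otimes\pi_Q$. Under $\mathbb P$, $(X_n)_{n\ge0}$, $(Y_n)_{n\ge0}$ are independent stationary Markov chains with transition matrices $P,Q$. Let $f:E\times E\to\mathbb Z$ with gcd of its values equal to $1$, $\nu(f)=\sum f\,d\nu$, and assume $\pi(f)<0$ and (C1): for some $n\ge1$ there are cycles $x_1,\dots,x_n$ w.r.t. $P$ and $y_1,\dots,y_n$ w.r.t. $Q$ (i.e. $P(x_k,x_{k+1})>0$, $Q(y_k,y_{k+1})>0$ for all $k$, indices mod $n$) with $\sum_kf(x_k,y_k)>0$. Let $\Phi(\theta)_{(x,y),(x',y')}=e^{\theta f(x',y')}P_{x,x'}Q_{y,y'}$,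 $\varphi(\theta)$ its spectral radius, $\theta^*>0$ the unique positive solution of $\varphi(\theta)=1$, $r^*$ a positive right eigenvector of $\Phi(\theta^* )$ for eigenvalue 1, $R^*_{(x,y),(x',y')}=\frac{r^*(x',y')}{r^*(x,y)}\Phi(\theta^* )_{(x,y),(x',y')}$, $\pi^*$ its invariant probability vector, and $\hat\pi(x,y,x',y')=\pi^*(x,y)R^*_{(x,y),(x',y')}$. The function $f$ is also regarded as a function on $E^2\times E^2$ via $f(x,y,x',y')=f(x',y')$. $\varphi_1(g)$ is the spectral radius of $\Phi_1(g)_{(x,y,z),(x',y',z')}=\exp(g(x,y,x',y')+g(x,z,x',z'))P_{x,x'}Q_{y,y'}Q_{z,z'}$. For $a=(i,j)$ and $\delta\ge1$, $\varepsilon_{a,\delta}$ is the empirical probability measure on $E^2\times E^2$, $\varepsilon_{a,\delta}(v)=\frac1\delta\sum_{k=1}^\delta 1\{((X_{i+k-1},Y_{j+k-1}),(X_{i+k},Y_{j+k}))=v\}$; $d$ is the total variation metric on probability measures on $E^2\times E^2$. *)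

From mathcomp Require Import all_boot all_order all_algebra.
From mathcomp Require Import classical_sets reals sequences exp.
From mathcomp Require Import complex.
Set Implicit Arguments.
Unset Strict Implicit.
Unset Printing Implicit Defensive.
Import GRing.Theory Num.Theory.
Local Open Scope ring_scope.

Section Defs.
Variable R : realType.

Definition fmx (T : finType) (A : T -> T -> R) : 'M[R]_#|T| :=
  \matrix_(i, j) A (enum_val i) (enum_val j).

Definition specrad (T : finType) (A : T -> T -> R) : R :=
  sup [set Normc.normc l | l in
        [set l : R[i] | eigenvalue (map_mx (fun x => x%:C%C) (fmx A)) l]]%classic.

Definition stochastic (E : finType) (P : E -> E -> R) : Prop :=
  (forall x y, 0 <= P x y) /\ (forall x, \sum_y P x y = 1).

Fixpoint mpow (E : finType) (P : E -> E -> R) (n : nat) : E -> E -> R :=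
  match n with
  | 0%N => fun x y => (x == y)%:R
  | n'.+1 => fun x y => \sum_z mpow P n' x z * P z y
  end.

Definition irreducible (E : finType) (P : E -> E -> R) : Prop :=
  forall x y, exists n, 0 < mpow P n x y.

(* every state has period 1: the gcd of {n >= 1 | P^n(x,x) > 0} is 1,
   i.e. no d > 1 divides all such n *)
Definition aperiodic (E : finType) (P : E -> E -> R) : Prop :=
  forall x (d : nat), (1 < d)%N ->
    exists n : nat, [/\ (0 < n)%N, 0 < mpow P n x x & ~~ (d %| n)%N].

Definition prob_vec (T : finType) (p : T -> R) : Prop :=
  (forall x, 0 <= p x) /\ \sum_x p x = 1.

Definition inv_vec (T : finType) (P : T -> T -> R) (p : T -> R) : Prop :=
  forall y, \sum_x p x * P x y = p y.

Definition Phi (E : finType) (P Q : E -> E -> R) (f : E -> E -> int) (theta : R)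
  (u v : E * E) : R :=
  expR (theta * (f v.1 v.2)%:~R) * P u.1 v.1 * Q u.2 v.2.

Definition varphi (E : finType) (P Q : E -> E -> R) (f : E -> E -> int) (theta : R) : R :=
  specrad (Phi P Q f theta).

Definition Rstar (E : finType) (P Q : E -> E -> R) (f : E -> E -> int) (theta : R)
  (r : E * E -> R) (u v : E * E) : R :=
  r v / r u * Phi P Q f theta u v.

(* measures on E^2 x E^2 are functions ((x,y),(x',y')) |-> mass *)
Definition pihat (E : finType) (pistar : E * E -> R) (Rs : E * E -> E * E -> R)
  (w : (E * E) * (E * E)) : R :=
  pistar w.1 * Rs w.1 w.2.

Definition Phi1 (E : finType) (P Q : E -> E -> R) (g : (E * E) * (E * E) -> R)
  (u v : E * E * E) : R :=
  let: (x, y, z) := u in let: (x', y', z') := v in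
  expR (g ((x, y), (x', y')) + g ((x, z), (x', z'))) * P x x' * Q y y' * Q z z'.

Definition varphi1 (E : finType) (P Q : E -> E -> R) (g : (E * E) * (E * E) -> R) : R :=
  specrad (Phi1 P Q g).

Definition integ (T : finType) (nu : T -> R) (h : T -> R) : R := \sum_t h t * nu t.

Definition f2 (E : finType) (f : E -> E -> int) (w : (E * E) * (E * E)) : R :=
  (f w.2.1 w.2.2)%:~R.

Definition tvd (T : finType) (mu nu : T -> R) : R :=
  \big[Num.max/0]_(A : {set T}) `|\sum_(t in A) (mu t - nu t)|.

Definition empirical (E : finType) (X Y : nat -> E) (i j delta : nat)
  (v : (E * E) * (E * E)) : R :=
  delta%:R^-1 * \sum_(1 <= k < delta.+1)
     ((((X (i + k - 1)%N, Y (j + k - 1)%N), (X (i + k)%N, Y (j + k)%N)) == v))%:R.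

Definition path_of (E : finType) (N : nat) (w : {ffun 'I_N.+1 -> E}) : nat -> E :=
  fun k => w (inord k).

Definition mc_weight (E : finType) (pi : E -> R) (P : E -> E -> R) (N : nat)
  (w : {ffun 'I_N.+1 -> E}) : R :=
  pi (w ord0) * \prod_(k < N) P (w (inord k)) (w (inord k.+1)).

(* probability of an event depending only on (X_0..X_N) and (Y_0..Y_N),
   X ~ stationary Markov(pi_P, P), Y ~ stationary Markov(pi_Q, Q), independent *)
Definition prob_ev (E : finType) (piP piQ : E -> R) (P Q : E -> E -> R) (N : nat)
  (ev : (nat -> E) -> (nat -> E) -> bool) : R :=
  \sum_(wx : {ffun 'I_N.+1 -> E}) \sum_(wy : {ffun 'I_N.+1 -> E})
     (ev (path_of wx) (path_of wy))%:R * (mc_weight piP P wx * mc_weight piQ Q wy).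

End Defs.

From mathcomp Require Import all_boot all_order all_algebra.
From mathcomp Require Import classical_sets reals sequences exp.
From mathcomp Require Import complex.
From mathcomp Require Import boolp ring lra zify.
Import Order.TTheory GRing.Theory Num.Theory.
Local Open Scope ring_scope.

Set Implicit Arguments.
Unset Strict Implicit.
Unset Printing Implicit Defensive.

(* On the event, both empirical measures are eta-close to pihat, so the sums of
   [g] along the two windows are at least (d1 + d2) (pihat(g) - O(eta)), while
   [s < d_j (pihat(f) + O(eta))] with [pihat(f) = pistar(f)] forces
   [d1 + d2 > 2 s / (pistar(f) + O(eta))].  An exponential Chebyshev bound thus
   reduces the claim to the exponential moment of the two window sums.
   The two Y-windows are disjoint, so the Markov property of Y at a time between
   them bounds this moment by a constant times E_X[G1 G2], where Gj is the
   Y-expectation of the j-th window given X.  The X-windows may overlap, so we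
   use 2 G1 G2 <= lam G1^2 + G2^2 / lam.  Finally E_X[Gj^2] is an expectation
   for the chain (X, Y, Z) with Z an independent copy of Y; inside the window its
   tilted kernel is Phi1(g), so E_X[Gj^2] = O(c^dj) for every c > varphi1(g),
   and the choice of lam balances the two windows to give c^((d1 + d2) / 2). *)

Section Evolve.
Variables (R : realType) (T : finType).
Implicit Types (mu nu : T -> R) (A B : nat -> T -> T -> R).

(* [evolve mu A n] is [mu A_0 ... A_(n-1)]: the law at time [n] of the chain
   with initial law [mu] and time-dependent (possibly tilted) kernels [A k]. *)
Fixpoint evolve mu A n : T -> R :=
  match n with 0%N => mu | n'.+1 => fun v => \sum_u evolve mu A n' u * A n' u v end.

Definition kernel_ge0 A := forall k u v, 0 <= A k u v.

Lemma evolve_ge0 mu A n v :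
  (forall u, 0 <= mu u) -> kernel_ge0 A -> 0 <= evolve mu A n v.
Proof.
move=> mu_ge0 A_ge0; elim: n v => [|n IH] v //=.
by apply: sumr_ge0 => u _; apply: mulr_ge0.
Qed.

Lemma evolveD mu A m n :
  evolve mu A (m + n) = evolve (evolve mu A m) (fun k => A (m + k)%N) n.
Proof. by elim: n => [|n IH]; rewrite ?addn0 // addnS /= IH. Qed.

Lemma eq_evolve mu A B n :
  (forall k, (k < n)%N -> A k = B k) -> evolve mu A n = evolve mu B n.
Proof.
elim: n => [|n IH] eqAB //=.
by rewrite IH => [|k /ltnW/eqAB//]; rewrite eqAB.
Qed.

Lemma sum_evolve_stochastic mu A n :
  (forall k u, (k < n)%N -> \sum_v A k u v = 1) ->
  \sum_v evolve mu A n v = \sum_v mu v.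
Proof.
elim: n => [|n IH] A1 //=.
rewrite exchange_big /= -IH => [|k u /ltnW/A1//].
by apply: eq_bigr => u _; rewrite -mulr_sumr A1 // mulr1.
Qed.

Lemma evolve_invariant mu A (P : T -> T -> R) n :
  (forall k, (k < n)%N -> A k = P) -> inv_vec P mu -> evolve mu A n = mu.
Proof.
move=> AP mu_inv; rewrite (eq_evolve _ AP).
by elim: n {AP} => [|n IH] //=; apply/funext => v; rewrite IH.
Qed.

Lemma ler_evolve mu nu A n v :
  (forall u, 0 <= mu u) -> (forall u, mu u <= nu u) -> kernel_ge0 A ->
  evolve mu A n v <= evolve nu A n v.
Proof.
move=> mu_ge0 le_mu_nu A_ge0; elim: n v => [|n IH] v //=.
by apply: ler_sum => u _; apply: ler_wpM2r.
Qed.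

Lemma evolveZ (c : R) mu A n v :
  evolve (fun u => c * mu u) A n v = c * evolve mu A n v.
Proof.
elim: n v => [|n IH] v //=.
by rewrite mulr_sumr; apply: eq_bigr => u _; rewrite IH mulrA.
Qed.

Lemma evolve_dirac (K : T -> T -> R) n u v :
  evolve (fun w => (w == u)%:R) (fun _ => K) n v = mpow K n u v.
Proof.
elim: n v => [|n IH] v /=; first by rewrite eq_sym.
by apply: eq_bigr => w _; rewrite IH.
Qed.

Lemma evolve_decomp mu A n v :
  evolve mu A n v = \sum_u mu u * evolve (fun w => (w == u)%:R) A n v.
Proof.
elim: n v => [|n IH] v /=.
  rewrite (bigD1 v) //= eqxx mulr1 big1 ?addr0 // => u /negPf.
  by rewrite eq_sym => ->; rewrite mulr0.
under eq_bigr do rewrite IH mulr_suml.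
rewrite exchange_big /=; apply: eq_bigr => u _; rewrite mulr_sumr.
by apply: eq_bigr => w _; rewrite mulrA.
Qed.

Lemma sum_evolve_window mu A n m d : (m + d <= n)%N ->
  (forall k u, (m + d <= k < n)%N -> \sum_v A k u v = 1) ->
  \sum_v evolve mu A n v = \sum_v evolve (evolve mu A m) (fun j => A (m + j)%N) d v.
Proof.
move=> mdn A1; rewrite -(subnKC mdn) evolveD sum_evolve_stochastic ?evolveD //.
by move=> k u kn; apply: A1; rewrite leq_addr -ltn_subRL.
Qed.

End Evolve.

Section Paths.
Variables (R : realType) (T : finType).

Definition ffun_rcons n (w : {ffun 'I_n -> T}) (x : T) : {ffun 'I_n.+1 -> T} :=
  [ffun k => if unlift ord_max k is Some k' then w k' else x].

Lemma unlift_max_widen n (k : 'I_n) :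
  unlift ord_max (widen_ord (leqnSn n) k) = Some k.
Proof.
case: unliftP => [j /(congr1 val) /= kj | /(congr1 val) /= k_max].
  by congr Some; apply: val_inj; move: kj; rewrite /bump leqNgt ltn_ord.
by move: (ltn_ord k); rewrite k_max ltnn.
Qed.

Lemma sum_ffun_rcons n (F : {ffun 'I_n.+1 -> T} -> R) :
  \sum_w F w = \sum_(w : {ffun 'I_n -> T}) \sum_(x : T) F (ffun_rcons w x).
Proof.
rewrite pair_big /= (reindex (fun p => ffun_rcons p.1 p.2)) //=.
exists (fun w => ([ffun k => w (widen_ord (leqnSn n) k)], w ord_max)).
  move=> [w x] _ /=; congr pair; last by rewrite ffunE unlift_none.
  by apply/ffunP => k; rewrite !ffunE unlift_max_widen.
move=> w _; apply/ffunP => k; rewrite ffunE.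
case: unliftP => [j ->|->] //; rewrite ffunE; congr (w _).
by apply: val_inj; rewrite /= /bump leqNgt ltn_ord.
Qed.

Lemma ffun_rcons_inord n (w : {ffun 'I_n.+1 -> T}) x k : (k <= n)%N ->
  ffun_rcons w x (inord k) = w (inord k).
Proof.
move=> kn; rewrite ffunE.
have -> : (@inord n.+1 k) = widen_ord (leqnSn n.+1) (inord k).
  by apply: val_inj; rewrite /= !inordK // ltnS // ltnW.
by rewrite unlift_max_widen.
Qed.

Lemma ffun_rcons_last n (w : {ffun 'I_n -> T}) x : ffun_rcons w x (inord n) = x.
Proof.
rewrite ffunE.
have -> : (@inord n n) = ord_max by apply: val_inj; rewrite /= inordK.
by rewrite unlift_none.
Qed.

Lemma sum_paths_evolve (mu : T -> R) (A : nat -> T -> T -> R) n (h : T -> R) :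
  \sum_(w : {ffun 'I_n.+1 -> T}) mu (w ord0) *
     (\prod_(k < n) A k (w (inord k)) (w (inord k.+1))) * h (w (inord n))
  = \sum_v evolve mu A n v * h v.
Proof.
have ord0_inord m : (ord0 : 'I_m.+1) = inord 0 by apply: val_inj; rewrite /= inordK.
elim: n h => [|n IH] h.
  rewrite sum_ffun_rcons (eq_bigr (fun _ => \sum_v mu v * h v)).
    by rewrite sumr_const card_ffun card_ord expn0 mulr1n.
  move=> w _; apply: eq_bigr => x _.
  by rewrite big_ord0 mulr1 ord0_inord ffun_rcons_last.
rewrite sum_ffun_rcons /=.
transitivity (\sum_(w : {ffun 'I_n.+1 -> T}) mu (w ord0) *
     (\prod_(k < n) A k (w (inord k)) (w (inord k.+1))) *
     (\sum_x A n (w (inord n)) x * h x)).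
  apply: eq_bigr => w _; rewrite mulr_sumr; apply: eq_bigr => x _.
  rewrite big_ord_recr /= ffun_rcons_last ord0_inord !ffun_rcons_inord //.
  rewrite -ord0_inord !mulrA; congr (_ * _ * _ * _); apply: eq_bigr => k _.
  by rewrite !ffun_rcons_inord // ltnW.
rewrite (IH (fun u => \sum_x A n u x * h x)) /=; under eq_bigr do rewrite mulr_sumr.
rewrite exchange_big /=; apply: eq_bigr => x _.
by rewrite mulr_suml; apply: eq_bigr => u _; rewrite mulrA.
Qed.

End Paths.

Section MatrixGrowth.
Variable R : realType.
Local Notation C := (R[i]).
Local Notation normc := (@Normc.normc R).

Lemma normc_ge0 (z : C) : 0 <= normc z.
Proof. by case: z => a b; rewrite /Normc.normc sqrtr_ge0. Qed.

Lemma normc_real (x : R) : normc x%:C%C = `|x|.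
Proof. by rewrite /Normc.normc /= expr0n /= addr0 sqrtr_sqr. Qed.

Definition mx_norm1 n (X : 'M[C]_n) : R := \sum_i \sum_j normc (X i j).

Lemma mx_norm1_ge0 n (X : 'M[C]_n) : 0 <= mx_norm1 X.
Proof. by apply: sumr_ge0 => i _; apply: sumr_ge0 => j _; apply: normc_ge0. Qed.

Lemma mx_norm1D n (X Y : 'M[C]_n) : mx_norm1 (X + Y) <= mx_norm1 X + mx_norm1 Y.
Proof.
rewrite /mx_norm1 -big_split /=; apply: ler_sum => i _.
by rewrite -big_split /=; apply: ler_sum => j _; rewrite mxE le_normcD.
Qed.

Lemma mx_norm1Z n (z : C) (X : 'M[C]_n) : mx_norm1 (z *: X) = normc z * mx_norm1 X.
Proof.
rewrite /mx_norm1 mulr_sumr; apply: eq_bigr => i _; rewrite mulr_sumr.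
by apply: eq_bigr => j _; rewrite mxE Normc.normcM.
Qed.

Lemma normc_entry_le_mx_norm1 n (X : 'M[C]_n) i j : normc (X i j) <= mx_norm1 X.
Proof.
rewrite /mx_norm1 (bigD1 i) //= (bigD1 j) //= -addrA lerDl.
apply: addr_ge0; first by apply: sumr_ge0 => k _; apply: normc_ge0.
by apply: sumr_ge0 => k _; apply: sumr_ge0 => l _; apply: normc_ge0.
Qed.

Lemma mx_norm1_0 n : mx_norm1 (0 : 'M[C]_n) = 0.
Proof.
by rewrite /mx_norm1 big1 // => i _; rewrite big1 // => j _; rewrite mxE Normc.normc0.
Qed.

Lemma linear_recursion_bound (u v : nat -> R) (a c M : R) : 0 <= a -> a < c ->
  (forall k, 0 <= u k) -> (forall k, v k <= M * c ^+ k) ->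
  (forall k, u k.+1 <= a * u k + v k) ->
  forall k, u k <= Num.max (u 0%N) (M / (c - a)) * c ^+ k.
Proof.
move=> a_ge0 lt_ac u_ge0 v_le u_rec; set M' := Num.max _ _.
have ca_gt0 : 0 < c - a by rewrite subr_gt0.
have le_M : M <= (c - a) * M' by rewrite mulrC -ler_pdivrMr // le_max lexx orbT.
elim=> [|k IH]; first by rewrite expr0 mulr1 le_max lexx.
apply: (le_trans (u_rec k)); apply: (le_trans (lerD (ler_wpM2l a_ge0 IH) (v_le k))).
have ck_ge0 : 0 <= c ^+ k by apply/exprn_ge0/(le_trans a_ge0)/ltW.
have -> : M' * c ^+ k.+1 = a * (M' * c ^+ k) + ((c - a) * M') * c ^+ k.
  by rewrite exprS; ring.
by rewrite lerD2l ler_wpM2r.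
Qed.

Lemma comm_scalar_mx n (X : 'M[C]_n) (a : C) : GRing.comm X a%:M.
Proof. by rewrite /GRing.comm -!mulmxE scalar_mxC. Qed.

Lemma mxpow_growth_annihilated n (B : 'M[C]_n.+1) (c : R) (rs : seq C) :
  (forall z, z \in rs -> normc z < c) ->
  forall Y : 'M[C]_n.+1, (\prod_(z <- rs) (B - z%:M)) *m Y = 0 ->
  exists M, forall k, mx_norm1 (B ^+ k *m Y) <= M * c ^+ k.
Proof.
elim: rs => [|z rs IH] rs_lt Y.
  by rewrite big_nil mul1mx => ->; exists 0 => k; rewrite mulmx0 mx_norm1_0 mul0r.
rewrite big_cons => annY.
have [M M_bound] : exists M, forall k,
    mx_norm1 (B ^+ k *m ((B - z%:M) *m Y)) <= M * c ^+ k.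
  apply: IH => [w wrs|]; first by apply: rs_lt; rewrite in_cons wrs orbT.
  rewrite mulmxA mulmxE.
  have <- : GRing.comm (B - z%:M) (\prod_(j <- rs) (B - j%:M)).
    apply: commr_prod => w _; apply/commrB/comm_scalar_mx.
    by apply/commr_sym/commrB; [exact: commr_refl | exact: comm_scalar_mx].
  by rewrite -mulmxE.
have z_lt : normc z < c by apply: rs_lt; rewrite in_cons eqxx.
eexists => k; apply: (linear_recursion_bound (normc_ge0 z) z_lt
   (fun k => mx_norm1_ge0 _) M_bound) => {}k.
have -> : B ^+ k.+1 *m Y = B ^+ k *m ((B - z%:M) *m Y) + z *: (B ^+ k *m Y).
  rewrite exprSr -mulmxE -mulmxA scalemxAr -mulmxDr; congr (_ *m _).
  by rewrite mulmxBl mul_scalar_mx subrK.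
by rewrite addrC (le_trans (mx_norm1D _ _)) // mx_norm1Z.
Qed.

(* By Cayley-Hamilton, the product of the [B - z] over the eigenvalues [z] annihilates [B]. *)
Lemma mxpow_growth n (B : 'M[C]_n) (c : R) :
  (forall z, eigenvalue B z -> normc z < c) ->
  exists M, forall k, mx_norm1 (B ^+ k) <= M * c ^+ k.
Proof.
case: n B => [|n] B eig_lt; first by exists 0 => k; rewrite /mx_norm1 big_ord0 mul0r.
have [rs] := closed_field_poly_normal (char_poly B).
rewrite (monicP (char_poly_monic B)) scale1r => chiB.
have rs_lt z : z \in rs -> normc z < c.
  by move=> zrs; apply: eig_lt; rewrite eigenvalue_root_char chiB root_prod_XsubC.
have ann : \prod_(z <- rs) (B - z%:M) *m 1%:M = 0.
  rewrite mulmx1 -(Cayley_Hamilton B) chiB rmorph_prod.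
  by apply: eq_bigr => z _; rewrite rmorphB /= horner_mx_X horner_mx_C.
have [M M_bound] := mxpow_growth_annihilated rs_lt ann.
by exists M => k; have := M_bound k; rewrite mulmx1.
Qed.

End MatrixGrowth.

Section SpectralRadius.
Variables (R : realType) (T : finType).
Local Notation normc := (@Normc.normc R).

Lemma fmx_mpow (A : T -> T -> R) k : fmx A ^+ k = fmx (mpow A k).
Proof.
elim: k => [|k IH].
  by apply/matrixP => i j; rewrite expr0 !mxE /= (inj_eq enum_val_inj).
rewrite exprSr IH -mulmxE; apply/matrixP => i j; rewrite !mxE /=.
rewrite [RHS](eq_bigl (fun w => w \in T)) // [RHS]big_enum_val.
by apply: eq_bigr => l _; rewrite !mxE.
Qed.

Lemma map_mx_pow n (X : 'M[R]_n) k :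
  (map_mx (fun x => x%:C%C) X) ^+ k = map_mx (fun x => x%:C%C) (X ^+ k).
Proof.
elim: k => [|k IH]; first by apply/matrixP => i j; rewrite !expr0 !mxE; case: eqP.
rewrite !exprSr IH -!mulmxE; apply/matrixP => i j; rewrite !mxE rmorph_sum.
by apply: eq_bigr => l _; rewrite !mxE rmorphM.
Qed.

Lemma normc_eigenvalue_le_specrad (A : T -> T -> R) z :
  eigenvalue (map_mx (fun x => x%:C%C) (fmx A)) z -> normc z <= specrad A.
Proof.
move=> eig_z; set B := map_mx (fun x => x%:C%C) (fmx A).
have [rs] := closed_field_poly_normal (char_poly B).
rewrite (monicP (char_poly_monic B)) scale1r => chiB.
have eig_rs l : eigenvalue B l -> l \in rs.
  by rewrite eigenvalue_root_char chiB root_prod_XsubC.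
apply: sup_upper_bound; last by exists z.
split; first by exists (normc z), z.
exists (\sum_(w <- rs) normc w) => x [l eig_l <-].
rewrite (big_rem _ (eig_rs l eig_l)) /= lerDl.
by apply: sumr_ge0 => w _; exact: normc_ge0.
Qed.

Lemma mpow_growth (A : T -> T -> R) c : 0 < c -> specrad A < c ->
  exists2 M, 0 <= M & forall k u v, `|mpow A k u v| <= M * c ^+ k.
Proof.
move=> c_gt0 lt_c; set B := map_mx (fun x => x%:C%C) (fmx A).
have [M M_bound] := mxpow_growth (fun z eig_z =>
  le_lt_trans (normc_eigenvalue_le_specrad eig_z) lt_c).
exists (Num.max M 0) => [|k u v]; first by rewrite le_max lexx orbT.
rewrite -normc_real.
have -> : (mpow A k u v)%:C%C = (B ^+ k) (enum_rank u) (enum_rank v).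
  by rewrite map_mx_pow mxE fmx_mpow mxE !enum_rankK.
apply: le_trans (normc_entry_le_mx_norm1 _ _ _) (le_trans (M_bound k) _).
by rewrite ler_pM2r ?exprn_gt0 // le_max lexx.
Qed.

End SpectralRadius.

Section MarkovBasics.
Variables (R : realType) (E : finType).

Lemma mpow_ge0 (P : E -> E -> R) n x y :
  (forall x y, 0 <= P x y) -> 0 <= mpow P n x y.
Proof.
move=> P_ge0; elim: n x y => [|n IH] x y /=; first by rewrite ler0n.
by apply: sumr_ge0 => z _; apply: mulr_ge0.
Qed.

Lemma sum_mpow_invariant (P : E -> E -> R) pi n y :
  inv_vec P pi -> \sum_x pi x * mpow P n x y = pi y.
Proof.
move=> pi_inv; rewrite -{2}(@evolve_invariant _ _ pi (fun _ => P) P n) //.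
by rewrite evolve_decomp; apply: eq_bigr => x _; rewrite evolve_dirac.
Qed.

Lemma invariant_gt0 (P : E -> E -> R) pi : stochastic P -> prob_vec pi ->
  inv_vec P pi -> irreducible P -> forall y, 0 < pi y.
Proof.
move=> [P_ge0 _] [pi_ge0 pi1] pi_inv P_irr y.
have [x pi_x] : exists x, 0 < pi x.
  apply/not_existsP => pi_le0; suff : \sum_x pi x <= 0 by rewrite pi1 ler10.
  by apply: sumr_le0 => x _; rewrite leNgt; apply/negP/pi_le0.
have [n mpow_gt0] := P_irr x y.
rewrite -(sum_mpow_invariant n y pi_inv) (bigD1 x) //=.
apply: ltr_pwDl; first exact: mulr_gt0.
by apply: sumr_ge0 => z _; apply: mulr_ge0 => //; apply: mpow_ge0.
Qed.

Lemma stochastic_le1 (P : E -> E -> R) x y : stochastic P -> P x y <= 1.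
Proof.
by case=> P_ge0 P1; rewrite -(P1 x) (bigD1 y) //= lerDl; apply: sumr_ge0.
Qed.

Lemma mc_weight_ge0 (pi : E -> R) (P : E -> E -> R) N (w : {ffun 'I_N.+1 -> E}) :
  stochastic P -> prob_vec pi -> 0 <= mc_weight pi P w.
Proof.
by move=> [P_ge0 _] [pi_ge0 _]; apply: mulr_ge0 => //; apply: prodr_ge0.
Qed.

Lemma sum_mc_weight (pi : E -> R) (P : E -> E -> R) N :
  stochastic P -> prob_vec pi -> \sum_(w : {ffun 'I_N.+1 -> E}) mc_weight pi P w = 1.
Proof.
move=> [_ P1] [_ pi1].
transitivity (\sum_v evolve pi (fun _ => P) N v * 1).
  by rewrite -sum_paths_evolve; apply: eq_bigr => w _; rewrite mulr1.
by under eq_bigr do rewrite mulr1; rewrite sum_evolve_stochastic.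
Qed.

Lemma mulr_integ_empirical (X Y : nat -> E) i j d (h : (E * E) * (E * E) -> R) :
  d%:R * integ (empirical R X Y i j d) h =
  \sum_(k < d) h ((X (i + k)%N, Y (j + k)%N), (X (i + k).+1, Y (j + k).+1)).
Proof.
case: d => [|d]; first by rewrite mul0r big_ord0.
rewrite /integ /empirical mulr_sumr.
under eq_bigr do rewrite mulrCA (mulrA d.+1%:R) mulfV ?pnatr_eq0 // mul1r mulr_sumr.
rewrite exchange_big /= big_add1 /= big_mkord; apply: eq_bigr => k _.
rewrite (bigD1 ((X (i + k)%N, Y (j + k)%N), (X (i + k).+1, Y (j + k).+1))) //=.
rewrite !addnS !subn1 /= eqxx mulr1 big1 ?addr0 // => t /negPf.
by rewrite eq_sym => ->; rewrite mulr0.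
Qed.

Lemma integ_dist_le_tvd (T : finType) (mu nu h : T -> R) :
  `|integ mu h - integ nu h| <= (\sum_t `|h t|) * tvd mu nu.
Proof.
rewrite /integ -sumrB mulr_suml; apply: (le_trans (ler_norm_sum _ _ _)).
apply: ler_sum => t _; rewrite -mulrBr normrM ler_wpM2l //.
have -> : mu t - nu t = \sum_(t' in [set t]) (mu t' - nu t') by rewrite big_set1.
exact: (Order.TotalTheory.le_bigmax _
  (fun A : {set T} => `|\sum_(t' in A) (mu t' - nu t')|) [set t]).
Qed.

Lemma integ_pihat_f2 (f : E -> E -> int) (pistar : E * E -> R) Rs :
  inv_vec Rs pistar ->
  integ (pihat pistar Rs) (f2 R f) = integ pistar (fun u => (f u.1 u.2)%:~R).
Proof.
move=> pistar_inv; rewrite /integ /pihat /f2.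
rewrite -(pair_bigA _ (fun u v => (f v.1 v.2)%:~R * (pistar u * Rs u v))) /=.
rewrite exchange_big /=; apply: eq_bigr => v _; rewrite -[in RHS]pistar_inv mulr_sumr.
by apply: eq_bigr => u _; rewrite mulrC.
Qed.

End MarkovBasics.

Lemma prodr_window (R : realType) (F : nat -> R) a d N : (a + d <= N)%N ->
  \prod_(k < N) (if (a <= k < a + d)%N then F k else 1) = \prod_(j < d) F (a + j)%N.
Proof.
move=> adN; rewrite -big_mkcond /= -(big_mkord (fun k => (a <= k < a + d)%N)).
rewrite -(big_nat_widen 0 (a + d) N (fun k => (a <= k)%N)) //.
rewrite (big_cat_nat (n := a)) //= ?leq_addr // big_nat_cond big1 ?mul1r; last first.
  by move=> k /andP [/andP [_ ka]]; rewrite leqNgt ka.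
rewrite big_nat_cond (eq_bigl (fun k => (a <= k < a + d)%N && true)); last first.
  by move=> k /=; rewrite andbT; case: (a <= k)%N; rewrite ?andbF ?andbT.
rewrite -big_nat_cond -{1}[a]add0n big_addn addKn big_mkord.
by apply: eq_bigr => j _; rewrite addnC.
Qed.

Section Windows.
Variables (R : realType) (E : finType) (g : (E * E) * (E * E) -> R).

(* The factor at time [k] of [exp] of the sum of [g] along the window of length
   [d] pairing [X] from [ox] with [Y] from [oy]; it depends on [Y] only through
   the transition [(y, y') = (Y k, Y k.+1)]. *)
Definition window_weight (X : nat -> E) (ox oy d k : nat) (y y' : E) : R :=
  if (oy <= k < oy + d)%N
  then expR (g ((X (ox + (k - oy))%N, y), (X (ox + (k - oy)).+1, y')))
  else 1.

Definition window_prod (X Y : nat -> E) ox oy d N :=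
  \prod_(k < N) window_weight X ox oy d k (Y k) (Y k.+1).

Lemma window_prod_expR X Y ox oy d N : (oy + d <= N)%N ->
  window_prod X Y ox oy d N =
  expR (\sum_(j < d) g ((X (ox + j)%N, Y (oy + j)%N), (X (ox + j).+1, Y (oy + j).+1))).
Proof.
move=> oydN; rewrite expR_sum /window_prod /window_weight.
rewrite (prodr_window (fun k => expR (g ((X (ox + (k - oy))%N, Y k),
                                        (X (ox + (k - oy)).+1, Y k.+1))))) //.
by apply: eq_bigr => j _; rewrite addKn.
Qed.

Lemma window_weight_out X ox oy d k y y' :
  ~~ (oy <= k < oy + d)%N -> window_weight X ox oy d k y y' = 1.
Proof. by rewrite /window_weight => /negPf ->. Qed.

Lemma window_weight_ge0 X ox oy d k y y' : 0 <= window_weight X ox oy d k y y'.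
Proof. by rewrite /window_weight; case: ifP => _ //; exact: expR_ge0. Qed.

Lemma window_weight_shift X ox oy d m k y y' : (m <= oy)%N ->
  window_weight X ox oy d (m + k) y y' = window_weight X ox (oy - m) d k y y'.
Proof.
move=> m_le; rewrite /window_weight.
have -> : (oy <= m + k < oy + d)%N = (oy - m <= k < oy - m + d)%N.
  by apply/idP/idP => /andP [? ?]; apply/andP; split; lia.
by case: ifP => // /andP [? ?]; have -> : (m + k - oy = k - (oy - m))%N by lia.
Qed.

Lemma window_prod_ge0 X Y ox oy d N : 0 <= window_prod X Y ox oy d N.
Proof. by apply: prodr_ge0 => k _; apply: window_weight_ge0. Qed.

End Windows.

Section Decoupling.
Variables (R : realType) (E : finType) (g : (E * E) * (E * E) -> R).
Variables (Q : E -> E -> R) (piQ : E -> R).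
Hypotheses (Q_stoch : stochastic Q) (piQ_inv : inv_vec Q piQ).
Hypothesis piQ_gt0 : forall y, 0 < piQ y.

Lemma sum_paths_tilted (F : nat -> E -> E -> R) N :
  \sum_(wy : {ffun 'I_N.+1 -> E}) mc_weight piQ Q wy *
     \prod_(k < N) F k (path_of wy k) (path_of wy k.+1)
  = \sum_v evolve piQ (fun k y y' => Q y y' * F k y y') N v.
Proof.
under [RHS]eq_bigr do rewrite -[evolve _ _ _ _]mulr1.
rewrite -sum_paths_evolve; apply: eq_bigr => w _.
by rewrite mulr1 /mc_weight big_split /= mulrA.
Qed.

Definition kappa := \sum_y (piQ y)^-1.

(* [Q u v <= 1 <= kappa * piQ v]: one step of [Q] forgets the past up to the factor [kappa]. *)
Lemma sum_mulQ_le_kappa (mu : E -> R) v : (forall u, 0 <= mu u) ->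
  \sum_u mu u * Q u v <= (\sum_u mu u) * kappa * piQ v.
Proof.
move=> mu_ge0; have kappa_ge1 : 1 <= kappa * piQ v.
  rewrite /kappa (bigD1 v) //= mulrDl mulVf ?gt_eqF // lerDl.
  by apply/mulr_ge0/ltW => //; apply: sumr_ge0 => y _; rewrite invr_ge0 ltW.
rewrite -mulrA mulr_suml; apply: ler_sum => u _; apply: ler_wpM2l => //.
exact: le_trans (stochastic_le1 _ _ Q_stoch) kappa_ge1.
Qed.

Definition tiltQ (X : nat -> E) ox oy d k y y' := Q y y' * window_weight g X ox oy d k y y'.

Definition tiltQ_aligned (X : nat -> E) o j y y' :=
  Q y y' * expR (g ((X (o + j)%N, y), (X (o + j).+1, y'))).

Lemma tiltQ_out X ox oy d k : ~~ (oy <= k < oy + d)%N -> tiltQ X ox oy d k = Q.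
Proof.
by move=> k_out; apply/funext => y; apply/funext => y'; rewrite /tiltQ window_weight_out ?mulr1.
Qed.

(* Stationarity of [Y] lets the window start at its own time [oy]. *)
Lemma sum_evolve_tiltQ X ox oy d N : (oy + d <= N)%N ->
  \sum_v evolve piQ (tiltQ X ox oy d) N v = \sum_v evolve piQ (tiltQ_aligned X ox) d v.
Proof.
move=> oydN; rewrite (sum_evolve_window piQ oydN); last first.
  move=> k u /andP [oydk _]; rewrite tiltQ_out; first by case: Q_stoch.
  by rewrite negb_and -!leqNgt oydk orbT.
rewrite (@evolve_invariant _ _ piQ _ Q oy) => // [|k koy]; last first.
  by rewrite tiltQ_out // negb_and -ltnNge koy.
apply/eq_bigr => v _; congr (_ v); apply: eq_evolve => j jd.
apply/funext => y; apply/funext => y'.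
by rewrite /tiltQ /tiltQ_aligned /window_weight leq_addr ltn_add2l jd addKn.
Qed.

Definition window_moment N (X : nat -> E) o d :=
  \sum_(wy : {ffun 'I_N.+1 -> E}) mc_weight piQ Q wy * window_prod g X (path_of wy) o o d N.

Lemma window_moment_evolve N X o d : (o + d <= N)%N ->
  window_moment N X o d = \sum_v evolve piQ (tiltQ_aligned X o) d v.
Proof.
by move=> odN; rewrite /window_moment (sum_paths_tilted (window_weight g X o o d))
  sum_evolve_tiltQ.
Qed.

(* Markov property of [Y] at time [d1 + 1], which lies between the two windows. *)
Lemma window_prod_decouple X i T d1 d2 N :
  (d1 + 1 <= i + T)%N -> N = (i + T + d1 + d2)%N ->
  \sum_(wy : {ffun 'I_N.+1 -> E}) mc_weight piQ Q wy *
     (window_prod g X (path_of wy) 0 0 d1 N * window_prod g X (path_of wy) i (i + T) d2 N)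
  <= kappa * window_moment N X 0 d1 * window_moment N X i d2.
Proof.
move=> d1_lt N_eq; rewrite !window_moment_evolve; try lia.
rewrite /window_prod; under eq_bigr do rewrite -big_split /=.
set A := fun k y y' => Q y y' *
  (window_weight g X 0 0 d1 k y y' * window_weight g X i (i + T) d2 k y y').
rewrite (sum_paths_tilted (fun k y y' =>
  window_weight g X 0 0 d1 k y y' * window_weight g X i (i + T) d2 k y y')) -/A.
set S1 := \sum_v evolve piQ (tiltQ_aligned X 0) d1 v.
have A_ge0 : kernel_ge0 A.
  by move=> k u v; apply/mulr_ge0/mulr_ge0; [case: Q_stoch|exact: window_weight_ge0..].
have A_head k : (k < d1)%N -> A k = tiltQ_aligned X 0 k.
  move=> kd1; apply/funext => y; apply/funext => y'.
  rewrite /A (@window_weight_out _ _ g X i (i + T)); last by apply/negP => /andP [? _]; lia.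
  by rewrite mulr1 /window_weight add0n kd1 subn0.
have A_d1 : A d1 = Q.
  apply/funext => y; apply/funext => y'; rewrite /A !window_weight_out ?mulr1 ?ltnn ?andbF //.
  by apply/negP => /andP [? _]; lia.
have A_tail : (fun k => A (d1.+1 + k)%N) = tiltQ X i (i + T - d1.+1) d2.
  apply/funext => k; apply/funext => y; apply/funext => y'.
  rewrite /A /tiltQ (@window_weight_out _ _ g X 0 0 d1); last by apply/negP => /andP [_ ?]; lia.
  by rewrite mul1r window_weight_shift //; lia.
have law_le v : evolve piQ A d1.+1 v <= (S1 * kappa) * piQ v.
  rewrite /= A_d1 (eq_evolve _ A_head); apply: sum_mulQ_le_kappa => u.
  by apply: evolve_ge0 => [w|k w w']; [apply/ltW | apply/mulr_ge0/expR_ge0; case: Q_stoch].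
have -> : N = (d1.+1 + (N - d1.+1))%N by lia.
rewrite evolveD; apply: (le_trans (y := \sum_v evolve (fun u => S1 * kappa * piQ u)
  (fun k => A (d1.+1 + k)%N) (N - d1.+1) v)).
  apply: ler_sum => v _; apply: ler_evolve => // u.
  by apply: evolve_ge0 => // w; apply/ltW.
under eq_bigr do rewrite evolveZ.
by rewrite -mulr_sumr A_tail sum_evolve_tiltQ ?(mulrC S1) //; lia.
Qed.

End Decoupling.

Section SecondMoment.
Variables (R : realType) (E : finType) (g : (E * E) * (E * E) -> R).
Variables (P Q : E -> E -> R) (piP piQ : E -> R).
Hypotheses (P_stoch : stochastic P) (Q_stoch : stochastic Q).
Hypotheses (piP_prob : prob_vec piP) (piQ_prob : prob_vec piQ).

Local Notation T3 := ((E * E) * E)%type.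

Lemma sum_ffun_triple M (H : {ffun 'I_M -> E} -> {ffun 'I_M -> E} -> {ffun 'I_M -> E} -> R) :
  \sum_wx \sum_wy \sum_wz H wx wy wz =
  \sum_(w : {ffun 'I_M -> T3})
     H [ffun k => (w k).1.1] [ffun k => (w k).1.2] [ffun k => (w k).2].
Proof.
under eq_bigr do rewrite pair_bigA; rewrite pair_bigA /=.
rewrite (reindex (fun w : {ffun 'I_M -> T3} =>
  ([ffun k => (w k).1.1], ([ffun k => (w k).1.2], [ffun k => (w k).2])))) //=.
exists (fun t : {ffun 'I_M -> E} * ({ffun 'I_M -> E} * {ffun 'I_M -> E}) =>
  [ffun k => ((t.1 k, t.2.1 k), t.2.2 k)] : {ffun 'I_M -> T3}) => [w _|[a [b c]] _] /=.
  by apply/ffunP => k; rewrite !ffunE; case: (w k) => [[]].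
by congr (_, (_, _)); apply/ffunP => k; rewrite !ffunE.
Qed.

Definition triple_init (u : T3) := piP u.1.1 * piQ u.1.2 * piQ u.2.

Definition triple_kernel (u v : T3) := P u.1.1 v.1.1 * Q u.1.2 v.1.2 * Q u.2 v.2.

Definition triple_tilt o d k (u v : T3) : R := triple_kernel u v *
  (if (o <= k < o + d)%N then
     expR (g ((u.1.1, u.1.2), (v.1.1, v.1.2)) + g ((u.1.1, u.2), (v.1.1, v.2)))
   else 1).

(* Squaring the [Y]-expectation introduces an independent copy [Z] of [Y]
   driven by the same [X]; the triple [(X, Y, Z)] is a chain on [T3]. *)
Lemma second_moment_evolve o d N :
  \sum_(wx : {ffun 'I_N.+1 -> E}) mc_weight piP P wx *
    window_moment g Q piQ N (path_of wx) o d ^+ 2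
  = \sum_v evolve triple_init (triple_tilt o d) N v.
Proof.
under eq_bigr do rewrite expr2 mulr_suml mulr_sumr.
under eq_bigr => wx _ do under eq_bigr => wy _ do rewrite !mulr_sumr.
rewrite (sum_ffun_triple (fun wx wy wz => mc_weight piP P wx *
  ((mc_weight piQ Q wy * window_prod g (path_of wx) (path_of wy) o o d N) *
   (mc_weight piQ Q wz * window_prod g (path_of wx) (path_of wz) o o d N)))).
under [RHS]eq_bigr do rewrite -[evolve _ _ _ _]mulr1.
rewrite -sum_paths_evolve; apply: eq_bigr => w _; rewrite mulr1.
have reorder (a b c x y z u v : R) :
  a * x * (b * y * u * (c * z * v)) = a * b * c * (x * y * z * (u * v)) by ring.
rewrite /mc_weight /window_prod /triple_init /path_of reorder -!big_split /= !ffunE.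
congr (_ * _); apply: eq_bigr => k _; rewrite /triple_tilt /triple_kernel /window_weight !ffunE /=.
by case: ifP => [/andP [? ?]|_]; rewrite ?mulr1 // subnKC // expRD; ring.
Qed.

Lemma sum_triple_kernel (u : T3) : \sum_(v : T3) triple_kernel u v = 1.
Proof.
rewrite -(pair_bigA _ (fun ab z => P u.1.1 ab.1 * Q u.1.2 ab.2 * Q u.2 z)) /=.
under eq_bigr do rewrite -mulr_sumr (proj2 Q_stoch) mulr1.
rewrite -(pair_bigA _ (fun a b => P u.1.1 a * Q u.1.2 b)) /=.
by under eq_bigr do rewrite -mulr_sumr (proj2 Q_stoch) mulr1; exact: (proj2 P_stoch).
Qed.

Lemma sum_triple_init : \sum_(v : T3) triple_init v = 1.
Proof.
rewrite /triple_init -(pair_bigA _ (fun ab z => piP ab.1 * piQ ab.2 * piQ z)) /=.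
under eq_bigr do rewrite -mulr_sumr (proj2 piQ_prob) mulr1.
rewrite -(pair_bigA _ (fun a b => piP a * piQ b)) /=.
by under eq_bigr do rewrite -mulr_sumr (proj2 piQ_prob) mulr1; exact: (proj2 piP_prob).
Qed.

Lemma triple_kernel_ge0 u v : 0 <= triple_kernel u v.
Proof. by apply: mulr_ge0; [apply: mulr_ge0|]; [case: P_stoch|case: Q_stoch|case: Q_stoch]. Qed.

Lemma triple_tilt_ge0 o d : kernel_ge0 (triple_tilt o d).
Proof.
move=> k u v; apply/mulr_ge0; first exact: triple_kernel_ge0.
by case: ifP => _ //; apply: expR_ge0.
Qed.

Lemma triple_tilt_out o d k : ~~ (o <= k < o + d)%N -> triple_tilt o d k = triple_kernel.
Proof.
by move=> /negPf k_out; apply/funext => u; apply/funext => v; rewrite /triple_tilt k_out mulr1.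
Qed.

Lemma triple_init_ge0 u : 0 <= triple_init u.
Proof.
by apply: mulr_ge0; [apply: mulr_ge0|]; [case: piP_prob|case: piQ_prob|case: piQ_prob].
Qed.

(* Inside the window the tilted triple kernel is [Phi1 P Q g]; outside it is stochastic. *)
Lemma second_moment_le o d N c M : (o + d <= N)%N ->
  (forall k u v, `|mpow (Phi1 P Q g) k u v| <= M * c ^+ k) ->
  \sum_(wx : {ffun 'I_N.+1 -> E}) mc_weight piP P wx *
    window_moment g Q piQ N (path_of wx) o d ^+ 2
  <= M * c ^+ d *+ (#|{: T3}| * #|{: T3}|).
Proof.
move=> odN Phi1_growth; rewrite second_moment_evolve (sum_evolve_window _ odN); last first.
  move=> k u /andP [odk _]; rewrite triple_tilt_out ?sum_triple_kernel //.
  by rewrite negb_and -leqNgt odk orbT.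
rewrite (eq_evolve _ (B := fun _ => Phi1 P Q g)); last first.
  move=> j jd; apply/funext => -[[x y] z]; apply/funext => -[[x' y'] z'].
  by rewrite /triple_tilt /triple_kernel /Phi1 /= leq_addr ltn_add2l jd mulrC !mulrA.
set nu := evolve triple_init (triple_tilt o d) o.
have nu_ge0 u : 0 <= nu u by apply: evolve_ge0; [exact: triple_init_ge0 | exact: triple_tilt_ge0].
have nu_le1 u : nu u <= 1.
  rewrite -sum_triple_init -(@sum_evolve_stochastic _ _ _ (triple_tilt o d) o) => [|k w ko].
    by rewrite (bigD1 u) //= lerDl; apply: sumr_ge0 => w _; apply: nu_ge0.
  by rewrite triple_tilt_out ?sum_triple_kernel // negb_and -ltnNge ko.
under eq_bigr do rewrite evolve_decomp.
rewrite mulrnA -[leRHS]sumr_const; apply: ler_sum => v _.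
rewrite -sumr_const; apply: ler_sum => u _; rewrite evolve_dirac.
have Mc_ge0 : 0 <= M * c ^+ d by apply: le_trans (Phi1_growth d u v).
apply: (le_trans (ler_wpM2l (nu_ge0 u) (le_trans (ler_norm _) (Phi1_growth d u v)))).
by rewrite -[leRHS]mul1r ler_wpM2r.
Qed.

End SecondMoment.

Lemma mulr_le_amgm (R : realType) (l x y : R) : 0 < l ->
  x * y <= (l * x ^+ 2 + l^-1 * y ^+ 2) / 2.
Proof.
move=> l_gt0; have li_ge0 : 0 <= l^-1 by rewrite invr_ge0 ltW.
have := mulr_ge0 li_ge0 (sqr_ge0 (l * x - y)).
have -> : l^-1 * (l * x - y) ^+ 2 = l * x ^+ 2 - 2 * (x * y) + l^-1 * y ^+ 2.
  by field; rewrite gt_eqF.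
by rewrite ler_pdivlMr //; lra.
Qed.

Lemma exists_gt_ln_add (R : realType) (rho gam : R) : 0 < gam ->
  exists c : R, [/\ 0 < c, rho < c & ln c = ln rho + gam].
Proof.
move=> gam_gt0; exists ((if 0 < rho then rho else 1) * expR gam); case: ifPn => [rho_gt0|rho_le0].
  by rewrite mulr_gt0 ?expR_gt0 // ltr_pMr ?expR_gt1 // lnM ?posrE ?expR_gt0 // expRK.
have rho_le0' : rho <= 0 by rewrite leNgt.
rewrite mul1r expRK ln0 // add0r; split => //; first exact: expR_gt0.
exact: le_lt_trans rho_le0' (expR_gt0 _).
Qed.

Section JointEvent.
Variables (R : realType) (E : finType).

Definition joint_event (f : E -> E -> int) (pih : (E * E) * (E * E) -> R)
    (eta s : R) (i T d1 d2 : nat) (X Y : nat -> E) : bool :=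
  let e1 := empirical R X Y 0 0 d1 in
  let e2 := empirical R X Y i (i + T) d2 in
  [&& s < d1%:R * integ e1 (f2 R f), tvd e1 pih < eta,
      s < d2%:R * integ e2 (f2 R f) & tvd e2 pih < eta].

Lemma empirical_window_bounds (X Y : nat -> E) (pih h : (E * E) * (E * E) -> R) eta i j d :
  tvd (empirical R X Y i j d) pih < eta ->
  d%:R * integ (empirical R X Y i j d) h <= d%:R * (integ pih h + (\sum_t `|h t|) * eta) /\
  d%:R * (integ pih h - (\sum_t `|h t|) * eta) <=
    \sum_(k < d) h ((X (i + k)%N, Y (j + k)%N), (X (i + k).+1, Y (j + k).+1)).
Proof.
move=> tvd_lt; rewrite -(mulr_integ_empirical X Y i j d h).
have : `|d%:R * integ (empirical R X Y i j d) h - d%:R * integ pih h|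
       <= d%:R * ((\sum_t `|h t|) * eta).
  rewrite -mulrBr normrM normr_nat ler_wpM2l //.
  apply: le_trans (integ_dist_le_tvd _ _ _) _; apply: ler_wpM2l; last exact: ltW.
  by apply: sumr_ge0 => t _.
by rewrite ler_distl mulrDr mulrBr => /andP [? ?]; split.
Qed.

Lemma joint_event_lt f pih eta s i T d1 d2 X Y :
  joint_event f pih eta s i T d1 d2 X Y ->
  let w := integ pih (f2 R f) + (\sum_t `|f2 R f t|) * eta in
  s < d1%:R * w /\ s < d2%:R * w.
Proof.
move=> /and4P [s_lt1 tvd1 s_lt2 tvd2] w.
have [f1 _] := empirical_window_bounds (f2 R f) tvd1.
have [f2' _] := empirical_window_bounds (f2 R f) tvd2.
by split; [exact: lt_le_trans f1 | exact: lt_le_trans f2'].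
Qed.

Lemma joint_event_window_sums f pih g eta s i T d1 d2 X Y :
  joint_event f pih eta s i T d1 d2 X Y ->
  let b := integ pih g - (\sum_t `|g t|) * eta in
  d1%:R * b <= \sum_(k < d1) g ((X (0 + k)%N, Y (0 + k)%N), (X (0 + k).+1, Y (0 + k).+1)) /\
  d2%:R * b <=
    \sum_(k < d2) g ((X (i + k)%N, Y (i + T + k)%N), (X (i + k).+1, Y (i + T + k).+1)).
Proof.
move=> /and4P [_ tvd1 _ tvd2] b.
by split; [case: (empirical_window_bounds g tvd1) | case: (empirical_window_bounds g tvd2)].
Qed.

End JointEvent.

Section JointDeviation.
Variables (R : realType) (E : finType) (P Q : E -> E -> R) (piP piQ : E -> R).
Variable g : (E * E) * (E * E) -> R.
Hypotheses (P_stoch : stochastic P) (Q_stoch : stochastic Q).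
Hypotheses (piP_prob : prob_vec piP) (piQ_prob : prob_vec piQ) (piQ_inv : inv_vec Q piQ).
Hypothesis piQ_gt0 : forall y, 0 < piQ y.

Local Notation n3 := (#|{: (E * E) * E}| * #|{: (E * E) * E}|)%N.

Lemma prob_ev_le1 N (ev : (nat -> E) -> (nat -> E) -> bool) : prob_ev piP piQ P Q N ev <= 1.
Proof.
rewrite /prob_ev -[leRHS](sum_mc_weight N P_stoch piP_prob); apply: ler_sum => wx _.
apply: (le_trans (y := \sum_(wy : {ffun 'I_N.+1 -> E}) mc_weight piP P wx * mc_weight piQ Q wy)).
  apply: ler_sum => wy _; rewrite -[leRHS]mul1r.
  by apply: ler_wpM2r; [apply: mulr_ge0; apply: mc_weight_ge0 | case: (ev _ _)].
by rewrite -mulr_sumr sum_mc_weight // mulr1.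
Qed.

Lemma prob_ev_pred0 N (ev : (nat -> E) -> (nat -> E) -> bool) :
  (forall X Y, ~~ ev X Y) -> prob_ev piP piQ P Q N ev = 0.
Proof.
move=> ev0; rewrite /prob_ev big1 // => wx _; rewrite big1 // => wy _.
by rewrite (negbTE (ev0 _ _)) mul0r.
Qed.

Lemma prob_ev_le_expR_moment N (ev : (nat -> E) -> (nat -> E) -> bool)
    (F : (nat -> E) -> (nat -> E) -> R) t :
  (forall X Y, 0 <= F X Y) -> (forall X Y, ev X Y -> expR t <= F X Y) ->
  prob_ev piP piQ P Q N ev <= expR (- t) *
    \sum_(wx : {ffun 'I_N.+1 -> E}) mc_weight piP P wx *
      \sum_(wy : {ffun 'I_N.+1 -> E}) mc_weight piQ Q wy * F (path_of wx) (path_of wy).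
Proof.
move=> F_ge0 F_ev; rewrite /prob_ev mulr_sumr; apply: ler_sum => wx _.
rewrite mulr_sumr mulr_sumr; apply: ler_sum => wy _.
rewrite [leRHS](_ : _ = expR (- t) * F (path_of wx) (path_of wy) *
                        (mc_weight piP P wx * mc_weight piQ Q wy)); last by ring.
apply: ler_wpM2r; first by apply: mulr_ge0; apply: mc_weight_ge0.
case: (boolP (ev _ _)) => [/F_ev le_F|_] /=; last by rewrite mulr_ge0 ?expR_ge0.
by rewrite expRN ler_pdivlMl ?expR_gt0 // mulr1.
Qed.

Lemma joint_window_moment_le c M i T d1 d2 N :
  0 < c -> (forall k u v, `|mpow (Phi1 P Q g) k u v| <= M * c ^+ k) ->
  (d1 + 1 <= i + T)%N -> N = (i + T + d1 + d2)%N ->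
  \sum_(wx : {ffun 'I_N.+1 -> E}) mc_weight piP P wx *
     \sum_(wy : {ffun 'I_N.+1 -> E}) mc_weight piQ Q wy *
        (window_prod g (path_of wx) (path_of wy) 0 0 d1 N *
         window_prod g (path_of wx) (path_of wy) i (i + T) d2 N)
  <= kappa piQ * (M *+ n3) * expR ((d1 + d2)%:R * ln c / 2).
Proof.
move=> c_gt0 growth d1_lt N_eq; set G := window_moment g Q piQ N.
set lam := expR ((d2%:R - d1%:R) * ln c / 2).
have lam_gt0 : 0 < lam := expR_gt0 _.
have kappa_ge0 : 0 <= kappa piQ by apply: sumr_ge0 => y _; rewrite invr_ge0 ltW.
apply: (le_trans (y := kappa piQ / 2 *
  (lam * \sum_(wx : {ffun 'I_N.+1 -> E}) mc_weight piP P wx * G (path_of wx) 0 d1 ^+ 2 +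
   lam^-1 * \sum_(wx : {ffun 'I_N.+1 -> E}) mc_weight piP P wx * G (path_of wx) i d2 ^+ 2))).
  rewrite [in leRHS]mulrDr 2![in leRHS]mulrA 2![in leRHS]mulr_sumr -big_split /=.
  apply: ler_sum => wx _.
  have W_ge0 : 0 <= mc_weight piP P wx by apply: mc_weight_ge0.
  apply: (le_trans (ler_wpM2l W_ge0 (window_prod_decouple _ Q_stoch piQ_inv piQ_gt0 _ d1_lt N_eq))).
  rewrite [leLHS](_ : _ = mc_weight piP P wx * kappa piQ *
                        (G (path_of wx) 0 d1 * G (path_of wx) i d2)); last by rewrite /G; ring.
  rewrite [leRHS](_ : _ = mc_weight piP P wx * kappa piQ *
    ((lam * G (path_of wx) 0 d1 ^+ 2 + lam^-1 * G (path_of wx) i d2 ^+ 2) / 2)); last by ring.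
  by apply: ler_wpM2l; [exact: mulr_ge0 | exact: mulr_le_amgm].
apply: (le_trans (y := kappa piQ / 2 *
  (lam * (M * c ^+ d1 *+ n3) + lam^-1 * (M * c ^+ d2 *+ n3)))).
  apply: ler_wpM2l; first by rewrite divr_ge0.
  by apply: lerD; (apply: ler_wpM2l; [rewrite ?invr_ge0 ltW | apply: second_moment_le => //; lia]).
have cE d : c ^+ d = expR (d%:R * ln c) by rewrite expRM_natl lnK // posrE.
have e1 : lam * c ^+ d1 = expR ((d1 + d2)%:R * ln c / 2).
  by rewrite cE /lam -expRD natrD; congr expR; field.
have e2 : lam^-1 * c ^+ d2 = expR ((d1 + d2)%:R * ln c / 2).
  by rewrite cE /lam -expRN -expRD natrD; congr expR; field.
rewrite -!mulrnAl [leLHS](_ : _ = kappa piQ / 2 * (M *+ n3) *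
  (lam * c ^+ d1 + lam^-1 * c ^+ d2)); last by ring.
by rewrite e1 e2 -subr_le0 (_ : _ - _ = 0) //; field.
Qed.

Lemma joint_event_prob_le f pih c M eta s i T d1 d2 :
  0 < c -> (forall k u v, `|mpow (Phi1 P Q g) k u v| <= M * c ^+ k) ->
  (d1 + 1 <= i + T)%N ->
  prob_ev piP piQ P Q (i + T + d1 + d2) (joint_event f pih eta s i T d1 d2) <=
  kappa piQ * (M *+ n3) *
    expR (- ((d1 + d2)%:R * (integ pih g - (\sum_t `|g t|) * eta - ln c / 2))).
Proof.
move=> c_gt0 growth d1_lt; set N := (i + T + d1 + d2)%N.
set b := integ pih g - (\sum_t `|g t|) * eta.
apply: (le_trans (@prob_ev_le_expR_moment N (joint_event f pih eta s i T d1 d2)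
  (fun X Y => window_prod g X Y 0 0 d1 N * window_prod g X Y i (i + T) d2 N)
  ((d1 + d2)%:R * b) _ _)).
- by move=> X Y; apply: mulr_ge0; apply: window_prod_ge0.
- move=> X Y /(joint_event_window_sums g) [b1 b2].
  rewrite !window_prod_expR; try lia.
  by rewrite -expRD ler_expR natrD mulrDl; exact: lerD.
apply: le_trans (ler_wpM2l (expR_ge0 _) (joint_window_moment_le c_gt0 growth d1_lt erefl)) _.
by rewrite mulrCA -expRD (_ : _ + _ = - ((d1 + d2)%:R * (b - ln c / 2))) //; field.
Qed.

Lemma joint_event_prob_le_rate f pih c M eta s i T d1 d2 :
  0 < c -> 0 <= M -> (forall k u v, `|mpow (Phi1 P Q g) k u v| <= M * c ^+ k) ->
  (d1 + 1 <= i + T)%N -> 0 < s ->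
  let w := integ pih (f2 R f) + (\sum_t `|f2 R f t|) * eta in
  let q := integ pih g - (\sum_t `|g t|) * eta - ln c / 2 in
  0 < w -> 0 <= q ->
  prob_ev piP piQ P Q (i + T + d1 + d2) (joint_event f pih eta s i T d1 d2) <=
  kappa piQ * (M *+ n3) * expR (- (s * (2 * q / w))).
Proof.
move=> c_gt0 M_ge0 growth d1_lt s_gt0 w q w_gt0 q_ge0.
have K_ge0 : 0 <= kappa piQ * (M *+ n3).
  by apply: mulr_ge0; [apply: sumr_ge0 => y _; rewrite invr_ge0 ltW | exact: mulrn_wge0].
have [/andP [s_lt1 s_lt2]|s_ge] := boolP ((s < d1%:R * w) && (s < d2%:R * w)); last first.
  rewrite prob_ev_pred0 => [|X Y]; first by rewrite mulr_ge0 ?expR_ge0.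
  by apply/negP => /joint_event_lt [s1 s2]; move: s_ge; rewrite s1 s2.
apply: (le_trans (@joint_event_prob_le f pih c M eta s i T d1 d2 c_gt0 growth d1_lt)).
apply: ler_wpM2l => //; rewrite ler_expR lerN2 -/q.
rewrite [leLHS](_ : _ = 2 * s / w * q); last by ring.
by apply: ler_wpM2r => //; rewrite ler_pdivrMr // natrD mulrDl; lra.
Qed.

Definition tail_bound f pih eta K rate := forall (s : R) (i d1 d2 T : nat),
  0 < s -> (1 <= T)%N -> (i <= d1)%N -> (d1 - i <= d2)%N -> (d1 + 1 <= i + T)%N ->
  prob_ev piP piQ P Q (i + T + d1 + d2) (joint_event f pih eta s i T d1 d2)
    <= K * expR (- (s * rate)).

Lemma tail_bound_nonpos_rate f pih eta rate : rate <= 0 -> tail_bound f pih eta 1 rate.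
Proof.
move=> rate_le0 s i d1 d2 T s_gt0 _ _ _ _; apply: le_trans (prob_ev_le1 _ _) _.
by rewrite mul1r -[leLHS]expR0 ler_expR oppr_ge0 mulr_ge0_le0 // ltW.
Qed.

Lemma exists_tail_bound_negative_drift f pih rate : integ pih (f2 R f) < 0 ->
  exists eta K, [/\ 0 < eta, 0 < K & tail_bound f pih eta K rate].
Proof.
set p := integ pih (f2 R f); set Cf := \sum_t `|f2 R f t| => p_lt0.
have Cf1_gt0 : 0 < Cf + 1 by rewrite ltr_wpDl //; apply: sumr_ge0 => t _.
exists (- p / (Cf + 1)), 1; split; rewrite ?divr_gt0 ?oppr_gt0 //.
move=> s i d1 d2 T s_gt0 _ _ _ _; rewrite prob_ev_pred0 ?mul1r ?expR_ge0 // => X Y.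
apply/negP => /joint_event_lt [+ _].
have -> : p + Cf * (- p / (Cf + 1)) = p / (Cf + 1) by field; rewrite gt_eqF.
have le0 : d1%:R * (p / (Cf + 1)) <= 0.
  by apply: mulr_ge0_le0 => //; rewrite ltW // pmulr_llt0 ?invr_gt0.
by move=> /lt_le_trans/(_ le0); rewrite ltNge (ltW s_gt0).
Qed.

(* Choosing [eta] small and [ln c] close to [ln (varphi1 P Q g)] makes the
   Chernoff rate [2 q / w] of [joint_event_prob_le_rate] within [eps] of the target. *)
Lemma rate_le_window_rate (a L p eps Cf Cg : R) : 0 < p -> 0 < eps ->
  0 <= Cf -> 0 <= Cg -> eps < (2 * a - L) / p ->
  let eta := eps * p / (2 * (2 * Cg + (2 * a - L) / p * Cf + 1)) in
  0 < eta /\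
  (2 * a - L) / p - eps <= 2 * (a - Cg * eta - (L + eps * p / 2) / 2) / (p + Cf * eta).
Proof.
set u := (2 * a - L) / p => p_gt0 eps_gt0 Cf_ge0 Cg_ge0 eps_lt_u eta.
have uCf_ge0 : 0 <= u * Cf by rewrite mulr_ge0 // ltW // (lt_trans eps_gt0).
have Z_gt0 : 0 < 2 * Cg + u * Cf + 1 by lra.
have eta_gt0 : 0 < eta by rewrite divr_gt0 ?mulr_gt0.
have Zeta : (2 * Cg + u * Cf + 1) * eta = eps * p / 2.
  by rewrite /eta; field; exact: lt0r_neq0.
have up : u * p = 2 * a - L by rewrite /u mulfVK // gt_eqF.
have epsCfeta_ge0 : 0 <= eps * (Cf * eta).
  by apply: mulr_ge0; [exact: ltW | exact: mulr_ge0 _ (ltW eta_gt0)].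
have w_gt0 : 0 < p + Cf * eta by have := mulr_ge0 Cf_ge0 (ltW eta_gt0); lra.
by split=> //; rewrite ler_pdivlMr //; nra.
Qed.

Lemma exists_tail_bound_positive_drift f pih eps : 0 < integ pih (f2 R f) -> 0 < eps ->
  let rate := (2 * integ pih g - ln (varphi1 P Q g)) / integ pih (f2 R f) - eps in
  0 < rate -> exists eta K, [/\ 0 < eta, 0 < K & tail_bound f pih eta K rate].
Proof.
move=> p_gt0 eps_gt0 rate rate_gt0.
have gam_gt0 : 0 < eps * integ pih (f2 R f) / 2 by rewrite divr_gt0 ?mulr_gt0.
have [c [c_gt0 phi1_lt lnc]] := exists_gt_ln_add (varphi1 P Q g) gam_gt0.
have [M M_ge0 growth] := mpow_growth c_gt0 phi1_lt.
have [Cf_ge0 Cg_ge0] : 0 <= \sum_t `|f2 R f t| /\ 0 <= \sum_t `|g t| by split; apply: sumr_ge0.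
have eps_lt : eps < (2 * integ pih g - ln (varphi1 P Q g)) / integ pih (f2 R f).
  by rewrite -subr_gt0.
have [] := rate_le_window_rate p_gt0 eps_gt0 Cf_ge0 Cg_ge0 eps_lt.
rewrite -lnc -/rate; set eta := _ / (2 * _) => eta_gt0 le_rate.
have w_gt0 : 0 < integ pih (f2 R f) + (\sum_t `|f2 R f t|) * eta.
  by have := mulr_ge0 Cf_ge0 (ltW eta_gt0); lra.
have q_ge0 : 0 <= integ pih g - (\sum_t `|g t|) * eta - ln c / 2.
  have := lt_le_trans rate_gt0 le_rate.
  by rewrite pmulr_lgt0 ?invr_gt0 // pmulr_rgt0 // => /ltW.
have K_ge0 : 0 <= kappa piQ * (M *+ n3).
  by apply: mulr_ge0; [apply: sumr_ge0 => y _; rewrite invr_ge0 ltW | exact: mulrn_wge0].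
exists eta, (Num.max 1 (kappa piQ * (M *+ n3))); split; rewrite ?lt_max ?ltr01 //.
move=> s i d1 d2 T s_gt0 _ _ _ d1_lt.
apply: (le_trans (@joint_event_prob_le_rate f pih c M eta s i T d1 d2
  c_gt0 M_ge0 growth d1_lt s_gt0 w_gt0 q_ge0)).
apply: ler_pM; rewrite ?expR_ge0 ?le_max ?lexx ?orbT // ler_expR lerN2.
by rewrite ler_pM2l.
Qed.

End JointDeviation.

Unset Implicit Arguments.

Theorem lemma5p3 (R : realType) (E : finType)
  (P Q : E -> E -> R) (piP piQ : E -> R)
  (HP : stochastic P) (HQ : stochastic Q)
  (HPi : irreducible P) (HQi : irreducible Q)
  (HPa : aperiodic P) (HQa : aperiodic Q)
  (HpiP : prob_vec piP /\ inv_vec P piP)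
  (HpiQ : prob_vec piQ /\ inv_vec Q piQ)
  (f : E -> E -> int)
  (Hgcd : \big[gcdz/0%Z]_(p : E * E) f p.1 p.2 = 1%Z)
  (Hneg : \sum_x \sum_y piP x * piQ y * (f x y)%:~R < 0)
  (HC1 : exists n : nat, (0 < n)%N /\ exists (xs ys : nat -> E),
      [/\ forall k, (k < n)%N -> 0 < P (xs k) (xs (k.+1 %% n)%N),
          forall k, (k < n)%N -> 0 < Q (ys k) (ys (k.+1 %% n)%N) &
          0 < \sum_(k < n) (f (xs k) (ys k))%:~R :> R])
  (thetastar : R) (Htheta : 0 < thetastar /\ varphi P Q f thetastar = 1)
  (Htheta_uniq : forall th : R, 0 < th -> varphi P Q f th = 1 -> th = thetastar)
  (rstar : E * E -> R) (Hrpos : forall u, 0 < rstar u)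
  (Hreig : forall u, \sum_v Phi P Q f thetastar u v * rstar v = rstar u)
  (pistar : E * E -> R)
  (Hpistar : prob_vec pistar /\ inv_vec (Rstar P Q f thetastar rstar) pistar)
  (g : (E * E) * (E * E) -> R) (eps : R) (Heps : 0 < eps) :
  exists eta K : R, [/\ 0 < eta, 0 < K &
    forall (s : R) (i delta1 delta2 T : nat),
      0 < s -> (1 <= T)%N -> (i <= delta1)%N -> (delta1 - i <= delta2)%N ->
      (delta1 + 1 <= i + T)%N ->
      let pih := pihat pistar (Rstar P Q f thetastar rstar) in
      prob_ev piP piQ P Q (i + T + delta1 + delta2)
        (fun X Y =>
           let e1 := empirical R X Y 0 0 delta1 in
           let e2 := empirical R X Y i (i + T) delta2 in
           [&& s < delta1%:R * integ e1 (f2 R f),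
               tvd e1 pih < eta,
               s < delta2%:R * integ e2 (f2 R f) &
               tvd e2 pih < eta])
      <= K * expR (- (s * ((2 * integ pih g - ln (varphi1 P Q g))
                              / integ pistar (fun u => (f u.1 u.2)%:~R) - eps)))].
Proof.
have piQ_gt0 := invariant_gt0 HQ (proj1 HpiQ) (proj2 HpiQ) HQi.
pose pih := pihat pistar (Rstar P Q f thetastar rstar).
suff tb : exists eta K, [/\ 0 < eta, 0 < K & tail_bound P Q piP piQ f pih eta K
  ((2 * integ pih g - ln (varphi1 P Q g)) / integ pistar (fun u => (f u.1 u.2)%:~R) - eps)].
  exact: tb.
rewrite -(integ_pihat_f2 f (proj2 Hpistar)) -/pih; set rate := _ - eps.
have [rate_le0|rate_gt0] := lerP rate 0.
  exists 1, 1; split; rewrite ?ltr01 //.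
  exact: (tail_bound_nonpos_rate HP HQ (proj1 HpiP) (proj1 HpiQ)).
have [p_lt0|p_gt0|p_eq0] := ltgtP (integ pih (f2 R f)) 0.
- exact: exists_tail_bound_negative_drift.
- exact: (exists_tail_bound_positive_drift HP HQ (proj1 HpiP) (proj1 HpiQ) (proj2 HpiQ) piQ_gt0).
- by move: rate_gt0; rewrite /rate p_eq0 invr0 mulr0 sub0r oppr_gt0 ltNge (ltW Heps).
Qed.
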